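(* Let $(X,Y,\eta,\mu,\psi,\epsilon,\delta,\phi)$ be a left Frobenius pair in a monoidal category $(\mathfrak{C},\otimes,\mathbbm{1})$. Then $\phi$ is a homomorphism of right $X$-modules and $\psi$ is a homomorphism of right $Y$-comodules, i.e. \[ (Y\otimes \mu)\circ(\phi\otimes X)=\phi\circ\mu \colon X\otimes X\to Y\otimes X, \qquad (\psi\otimes Y)\circ(X\otimes\delta)=\delta\circ\psi\colon X\otimes Y\to Y\otimes Y. \]
   Context: Throughout, $(\mathfrak{C},\otimes,\mathbbm{1})$ is a monoidal category; associativity and unit isomorphisms are suppressed (identifying $\mathbbm{1}\otimes A=A=A\otimes\mathbbm{1}$). A \emph{left Frobenius pair} in $\mathfrak{C}$ consists of objects $X,Y$ and morphisms $\epsilon\colon Y\to\mathbbm{1}$, $\eta\colon\mathbbm{1}\to X$, $\delta\colon Y\to Y\otimes Y$, $\mu\colon X\otimes X\to X$, $\phi\colon X\to Y\otimes X$, $\psi\colon X\otimes Y\to Y$ such that: (1a) $(X,\eta,\mu)$ is an associative unital monoid: $\mu(\mu\otimes X)=\mu(X\otimes\mu)$, $\mu(\eta\otimes X)=\mathrm{id}_X=\mu(X\otimes\eta)$; (1b) $(Y,\epsilon,\delta)$ is a coassociative counital comonoid: $(\delta\otimes Y)\delta=(Y\otimes\delta)\delta$, $(\epsilon\otimes Y)\delta=\mathrm{id}_Y=(Y\otimes\epsilon)\delta$; (2a) $\psi$ is a left $X$-module structure on $Y$: $\psi(\mu\otimes Y)=\psi(X\otimes\psi)$, $\psi(\eta\otimes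 Y)=\mathrm{id}_Y$; (2b) $\phi$ is a left $Y$-comodule structure on $X$: $(\delta\otimes X)\phi=(Y\otimes\phi)\phi$, $(\epsilon\otimes X)\phi=\mathrm{id}_X$; (3a) $\phi$ is a left $X$-module map: $\phi\circ\mu=(\psi\otimes X)\circ(X\otimes\phi)$; (3b) $\psi$ is a left $Y$-comodule map: $\delta\circ\psi=(Y\otimes\psi)\circ(\phi\otimes Y)$. *)

Set Implicit Arguments.
Set Universe Polymorphism.

Record MonoidalCategory := {
  Ob : Type;
  Hom : Ob -> Ob -> Type;
  idm : forall A, Hom A A;
  comp : forall A B C, Hom B C -> Hom A B -> Hom A C;
  comp_assoc : forall A B C D (h : Hom C D) (g : Hom B C) (f : Hom A B),
      comp h (comp g f) = comp (comp h g) f;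
  comp_idl : forall A B (f : Hom A B), comp (idm B) f = f;
  comp_idr : forall A B (f : Hom A B), comp f (idm A) = f;
  tens : Ob -> Ob -> Ob;
  tensm : forall A B A' B', Hom A A' -> Hom B B' -> Hom (tens A B) (tens A' B');
  tensm_id : forall A B, tensm (idm A) (idm B) = idm (tens A B);
  tensm_comp : forall A B C A' B' C' (g : Hom B C) (f : Hom A B)
      (g' : Hom B' C') (f' : Hom A' B'),
      tensm (comp g f) (comp g' f') = comp (tensm g g') (tensm f f');
  unit : Ob;
  assoc : forall A B C, Hom (tens (tens A B) C) (tens A (tens B C));
  assoc_inv : forall A B C, Hom (tens A (tens B C)) (tens (tens A B) C);
  assoc_inv_l : forall A B C, comp (assoc_inv A B C) (assoc A B C) = idm _;
  assoc_inv_r : forall A B C, comp (assoc A B C) (assoc_inv A B C) = idm _;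
  assoc_nat : forall A B C A' B' C' (f : Hom A A') (g : Hom B B') (h : Hom C C'),
      comp (assoc A' B' C') (tensm (tensm f g) h)
      = comp (tensm f (tensm g h)) (assoc A B C);
  lunit : forall A, Hom (tens unit A) A;
  lunit_inv : forall A, Hom A (tens unit A);
  lunit_inv_l : forall A, comp (lunit_inv A) (lunit A) = idm _;
  lunit_inv_r : forall A, comp (lunit A) (lunit_inv A) = idm _;
  lunit_nat : forall A A' (f : Hom A A'),
      comp (lunit A') (tensm (idm unit) f) = comp f (lunit A);
  runit : forall A, Hom (tens A unit) A;
  runit_inv : forall A, Hom A (tens A unit);
  runit_inv_l : forall A, comp (runit_inv A) (runit A) = idm _;
  runit_inv_r : forall A, comp (runit A) (runit_inv A) = idm _;
  runit_nat : forall A A' (f : Hom A A'),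
      comp (runit A') (tensm f (idm unit)) = comp f (runit A);
  pentagon : forall A B C D,
      comp (assoc A B (tens C D)) (assoc (tens A B) C D)
      = comp (tensm (idm A) (assoc B C D))
             (comp (assoc A (tens B C) D) (tensm (assoc A B C) (idm D)));
  triangle : forall A B,
      comp (tensm (idm A) (lunit B)) (assoc A unit B)
      = tensm (runit A) (idm B)
}.

Arguments Hom {m} _ _.
Arguments idm {m} A.
Arguments comp {m A B C} _ _.
Arguments tensm {m A B A' B'} _ _.
Arguments assoc {m} A B C.
Arguments assoc_inv {m} A B C.
Arguments lunit {m} A.
Arguments lunit_inv {m} A.
Arguments runit {m} A.
Arguments runit_inv {m} A.
Arguments unit {m}.
Arguments tens {m} _ _.

(* Left Frobenius pair, with the suppressed associativity/unit
   isomorphisms inserted explicitly. *)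
Definition is_left_Frobenius_pair {C : MonoidalCategory} {X Y : Ob C}
  (eps : Hom Y unit) (eta : Hom unit X) (delta : Hom Y (tens Y Y))
  (mu : Hom (tens X X) X) (phi : Hom X (tens Y X)) (psi : Hom (tens X Y) Y)
  : Prop :=
  (* (1a) *)
  comp mu (tensm mu (idm X)) = comp mu (comp (tensm (idm X) mu) (assoc X X X)) /\
  comp mu (tensm eta (idm X)) = lunit X /\
  comp mu (tensm (idm X) eta) = runit X /\
  (* (1b) *)
  comp (assoc Y Y Y) (comp (tensm delta (idm Y)) delta)
    = comp (tensm (idm Y) delta) delta /\
  comp (tensm eps (idm Y)) delta = lunit_inv Y /\
  comp (tensm (idm Y) eps) delta = runit_inv Y /\
  (* (2a) *)
  comp psi (tensm mu (idm Y)) = comp psi (comp (tensm (idm X) psi) (assoc X X Y)) /\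
  comp psi (tensm eta (idm Y)) = lunit Y /\
  (* (2b) *)
  comp (assoc Y Y X) (comp (tensm delta (idm X)) phi)
    = comp (tensm (idm Y) phi) phi /\
  comp (tensm eps (idm X)) phi = lunit_inv X /\
  (* (3a) *)
  comp phi mu = comp (tensm psi (idm X)) (comp (assoc_inv X Y X) (tensm (idm X) phi)) /\
  (* (3b) *)
  comp delta psi = comp (tensm (idm Y) psi) (comp (assoc Y X Y) (tensm phi (idm Y))).

From Stdlib Require Import Setoid.

(* Write e := phi ∘ eta : 1 -> Y ⊗ X and b := eps ∘ psi : X ⊗ Y -> 1, and for
   f : A -> Y ⊗ X let ract f := (Y ⊗ mu) ∘ α ∘ (f ⊗ X) be f followed by the
   right action of X on Y ⊗ X.

   - Axioms (3b), (2a) and (1b) give the zigzag identity for (e, b) on Y;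
     axioms (3a) and (2b) express mu through phi and b.  Together they show
     phi = ract e ∘ λ⁻¹: phi is right multiplication by the element e.
   - Associativity of mu gives ract (ract f) = ract f ∘ (A ⊗ mu) ∘ α, and
     with Kelly's lemma this yields ract phi = phi ∘ mu.
   - The second claim is the first one in the opposite monoidal category
     (same tensor, reversed arrows), in which a left Frobenius pair
     (X, Y, mu, psi, ...) becomes the left Frobenius pair (Y, X, delta, phi, ...)
     with the roles of phi and psi exchanged. *)

Set Universe Polymorphism.

#[local] Arguments comp_assoc {m A B C D} h g f.
#[local] Arguments comp_idl {m A B} f.
#[local] Arguments comp_idr {m A B} f.
#[local] Arguments tensm_id {m} A B.
#[local] Arguments tensm_comp {m A B C A' B' C'} g f g' f'.
#[local] Arguments assoc_inv_l {m} A B C.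
#[local] Arguments assoc_inv_r {m} A B C.
#[local] Arguments assoc_nat {m A B C A' B' C'} f g h.
#[local] Arguments lunit_inv_l {m} A.
#[local] Arguments lunit_inv_r {m} A.
#[local] Arguments lunit_nat {m A A'} f.
#[local] Arguments runit_inv_l {m} A.
#[local] Arguments runit_inv_r {m} A.
#[local] Arguments runit_nat {m A A'} f.
#[local] Arguments pentagon {m} A B C D.
#[local] Arguments triangle {m} A B.

Notation "g ∘ f" := (comp g f) (at level 40, left associativity).
Notation "f ⊗ g" := (tensm f g) (at level 35).

(* Composites are kept right-associated; an equation between composites is
   then used to rewrite inside a longer composite by postcomposing it with
   an arbitrary tail and re-associating. *)
Lemma postcompose_eq {C : MonoidalCategory} {A B : Ob C} {f g : Hom A B} :
  f = g -> forall (Z : Ob C) (r : Hom Z A), f ∘ r = g ∘ r.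
Proof. now intros ->. Qed.

Ltac normalize := repeat rewrite <- comp_assoc.

Ltac postcompose_normalized H H' :=
  pose proof (postcompose_eq H) as H';
  repeat setoid_rewrite <- comp_assoc in H'.

Tactic Notation "crewrite" constr(H) :=
  let H' := fresh in postcompose_normalized H H';
  first [rewrite H' | rewrite H]; clear H'; normalize.
Tactic Notation "crewrite" "<-" constr(H) :=
  let H' := fresh in postcompose_normalized H H';
  first [rewrite <- H' | rewrite <- H]; clear H'; normalize.

Section Coherence.
Context {C : MonoidalCategory}.

Lemma tensm_compl {A B D : Ob C} (E : Ob C) (g : Hom B D) (f : Hom A B) :
  idm E ⊗ (g ∘ f) = (idm E ⊗ g) ∘ (idm E ⊗ f).
Proof. now rewrite <- tensm_comp, comp_idl. Qed.

Lemma tensm_compr {A B D : Ob C} (E : Ob C) (g : Hom B D) (f : Hom A B) :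
  (g ∘ f) ⊗ idm E = (g ⊗ idm E) ∘ (f ⊗ idm E).
Proof. now rewrite <- tensm_comp, comp_idl. Qed.

Lemma interchange_lr {A B A' B' : Ob C} (f : Hom A A') (g : Hom B B') :
  (f ⊗ idm B') ∘ (idm A ⊗ g) = f ⊗ g.
Proof. now rewrite <- tensm_comp, comp_idl, comp_idr. Qed.

Lemma interchange_rl {A B A' B' : Ob C} (f : Hom A A') (g : Hom B B') :
  (idm A' ⊗ g) ∘ (f ⊗ idm B) = f ⊗ g.
Proof. now rewrite <- tensm_comp, comp_idl, comp_idr. Qed.

Lemma tensm_inverse {A B A' B' : Ob C} (f : Hom A A') (f' : Hom A' A)
  (g : Hom B B') (g' : Hom B' B) :
  f ∘ f' = idm A' -> g ∘ g' = idm B' -> (f ⊗ g) ∘ (f' ⊗ g') = idm (tens A' B').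
Proof. intros Hf Hg. now rewrite <- tensm_comp, Hf, Hg, tensm_id. Qed.

Lemma inverse_unique {A B : Ob C} (g h : Hom B A) (f : Hom A B) :
  g ∘ f = idm A -> f ∘ h = idm B -> g = h.
Proof. intros Hg Hh. now rewrite <- (comp_idr g), <- Hh, comp_assoc, Hg, comp_idl. Qed.

Lemma square_inverse {A B A' B' : Ob C} (i : Hom A A') (i' : Hom A' A)
  (j : Hom B B') (j' : Hom B' B) (f : Hom A B) (g : Hom A' B') :
  i ∘ i' = idm A' -> j' ∘ j = idm B -> j ∘ f = g ∘ i -> f ∘ i' = j' ∘ g.
Proof.
  intros Hi Hj Hsq.
  rewrite <- (comp_idl (f ∘ i')), <- Hj. normalize.
  crewrite Hsq. now rewrite Hi, comp_idr.
Qed.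

Lemma assoc_inv_nat {A B D A' B' D' : Ob C} (f : Hom A A') (g : Hom B B') (h : Hom D D') :
  ((f ⊗ g) ⊗ h) ∘ assoc_inv A B D = assoc_inv A' B' D' ∘ (f ⊗ (g ⊗ h)).
Proof.
  apply (square_inverse (assoc A B D) _ (assoc A' B' D'));
    auto using assoc_inv_r, assoc_inv_l, assoc_nat.
Qed.

Lemma lunit_inv_nat {A A' : Ob C} (f : Hom A A') :
  (idm unit ⊗ f) ∘ lunit_inv A = lunit_inv A' ∘ f.
Proof.
  apply (square_inverse (lunit A) _ (lunit A')); auto using lunit_inv_r, lunit_inv_l, lunit_nat.
Qed.

Lemma runit_inv_nat {A A' : Ob C} (f : Hom A A') :
  (f ⊗ idm unit) ∘ runit_inv A = runit_inv A' ∘ f.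
Proof.
  apply (square_inverse (runit A) _ (runit A')); auto using runit_inv_r, runit_inv_l, runit_nat.
Qed.

Lemma unit_tensor_faithful {A B : Ob C} (f g : Hom A B) :
  idm unit ⊗ f = idm unit ⊗ g -> f = g.
Proof.
  intro H.
  assert (Hconj : forall h : Hom A B, h = lunit B ∘ (idm unit ⊗ h) ∘ lunit_inv A).
  { intro h. now rewrite lunit_nat, <- comp_assoc, lunit_inv_r, comp_idr. }
  now rewrite (Hconj f), (Hconj g), H.
Qed.

Lemma cancel_split_epi {A B D : Ob C} (p : Hom A B) (s : Hom B A) (f g : Hom B D) :
  p ∘ s = idm B -> f ∘ p = g ∘ p -> f = g.
Proof.
  intros Hps H. now rewrite <- (comp_idr f), <- (comp_idr g), <- Hps, !comp_assoc, H.
Qed.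

(* Kelly's lemma: the left unitor of A ⊗ B is the left unitor of A tensored
   with B.  It follows from the pentagon and triangle axioms after tensoring
   with the unit object, which is faithful. *)
Lemma kelly_lunit (A B : Ob C) :
  lunit (tens A B) ∘ assoc unit A B = lunit A ⊗ idm B.
Proof.
  apply unit_tensor_faithful.
  apply (cancel_split_epi (assoc unit (tens unit A) B ∘ (assoc unit unit A ⊗ idm B))
           ((assoc_inv unit unit A ⊗ idm B) ∘ assoc_inv unit (tens unit A) B)).
  { normalize.
    crewrite (tensm_inverse _ _ _ _ (assoc_inv_r unit unit A) (comp_idl (idm B))).
    now rewrite comp_idl, assoc_inv_r. }
  rewrite tensm_compl. normalize. rewrite <- pentagon.
  crewrite (triangle unit (tens A B)).
  rewrite <- (tensm_id A B), <- assoc_nat, <- triangle, tensm_compr. normalize.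
  now crewrite (assoc_nat (idm unit) (lunit A) (idm B)).
Qed.

Lemma kelly_lunit_inv (A B : Ob C) :
  assoc unit A B ∘ (lunit_inv A ⊗ idm B) = lunit_inv (tens A B).
Proof.
  rewrite <- (comp_idr (lunit_inv (tens A B))).
  apply (square_inverse (lunit A ⊗ idm B) _ (lunit (tens A B))).
  - apply tensm_inverse; [apply lunit_inv_r | apply comp_idl].
  - apply lunit_inv_l.
  - now rewrite kelly_lunit, comp_idl.
Qed.

Lemma kelly_lunit_inv' (A B : Ob C) :
  assoc_inv unit A B ∘ lunit_inv (tens A B) = lunit_inv A ⊗ idm B.
Proof. now rewrite <- kelly_lunit_inv, comp_assoc, assoc_inv_l, comp_idl. Qed.

(* The pentagon, solved for the composite (A ⊗ α⁻¹) ∘ α. *)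
Lemma pentagon_mixed (A B D E : Ob C) :
  (idm A ⊗ assoc_inv B D E) ∘ assoc A B (tens D E)
  = assoc A (tens B D) E ∘ (assoc A B D ⊗ idm E) ∘ assoc_inv (tens A B) D E.
Proof.
  symmetry.
  apply (square_inverse (assoc (tens A B) D E) _ (idm A ⊗ assoc B D E)).
  - apply assoc_inv_r.
  - apply tensm_inverse; [apply comp_idl | apply assoc_inv_l].
  - now rewrite pentagon.
Qed.

Lemma pentagon_inv (A B D E : Ob C) :
  assoc_inv (tens A B) D E ∘ assoc_inv A B (tens D E)
  = (assoc_inv A B D ⊗ idm E) ∘ assoc_inv A (tens B D) E ∘ (idm A ⊗ assoc_inv B D E).
Proof.
  apply (inverse_unique _ _ (assoc A B (tens D E) ∘ assoc (tens A B) D E)).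
  - normalize. crewrite (assoc_inv_l A B (tens D E)). now rewrite comp_idl, assoc_inv_l.
  - rewrite pentagon. normalize.
    crewrite (tensm_inverse _ _ _ _ (assoc_inv_r A B D) (comp_idl (idm E))).
    rewrite comp_idl. crewrite (assoc_inv_r A (tens B D) E). rewrite comp_idl.
    apply tensm_inverse; [apply comp_idl | apply assoc_inv_r].
Qed.

Lemma triangle_inv (A B : Ob C) :
  assoc_inv A unit B ∘ (idm A ⊗ lunit_inv B) = runit_inv A ⊗ idm B.
Proof.
  apply (inverse_unique _ _ ((idm A ⊗ lunit B) ∘ assoc A unit B)).
  - normalize. crewrite (tensm_inverse _ _ _ _ (comp_idl (idm A)) (lunit_inv_l B)).
    now rewrite comp_idl, assoc_inv_l.
  - rewrite triangle. apply tensm_inverse; [apply runit_inv_r | apply comp_idl].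
Qed.
End Coherence.

Definition opposite (C : MonoidalCategory) : MonoidalCategory.
Proof.
  refine {|
    Ob := Ob C;
    Hom := fun A B => Hom B A;
    idm := fun A => idm A;
    comp := fun A B D g f => f ∘ g;
    tens := @tens C;
    tensm := fun A B A' B' f g => f ⊗ g;
    unit := unit;
    assoc := @assoc_inv C;
    assoc_inv := @assoc C;
    lunit := @lunit_inv C;
    lunit_inv := @lunit C;
    runit := @runit_inv C;
    runit_inv := @runit C |}.
  - intros. symmetry. apply comp_assoc.
  - intros. apply comp_idr.
  - intros. apply comp_idl.
  - intros. apply tensm_id.
  - intros. apply tensm_comp.
  - intros. apply assoc_inv_l.
  - intros. apply assoc_inv_r.
  - intros. apply assoc_inv_nat.
  - intros. apply lunit_inv_l.
  - intros. apply lunit_inv_r.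
  - intros. apply lunit_inv_nat.
  - intros. apply runit_inv_l.
  - intros. apply runit_inv_r.
  - intros. apply runit_inv_nat.
  - intros. apply pentagon_inv.
  - intros. apply triangle_inv.
Defined.

Section Zigzag.
Context {C : MonoidalCategory} {W Y : Ob C}.
Variables (e : Hom unit (tens Y W)) (b : Hom (tens W Y) unit).

Definition zigzag : Hom Y Y :=
  runit Y ∘ (idm Y ⊗ b) ∘ assoc Y W Y ∘ (e ⊗ idm Y) ∘ lunit_inv Y.

Lemma zigzag_tensor (V : Ob C) :
  (idm Y ⊗ lunit V) ∘ (idm Y ⊗ (b ⊗ idm V)) ∘ (idm Y ⊗ assoc_inv W Y V)
    ∘ assoc Y W (tens Y V) ∘ (e ⊗ idm (tens Y V)) ∘ lunit_inv (tens Y V)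
  = zigzag ⊗ idm V.
Proof.
  unfold zigzag. rewrite !tensm_compr. normalize.
  crewrite (pentagon_mixed Y W Y V).
  crewrite <- (assoc_nat (idm Y) b (idm V)).
  crewrite (triangle Y V).
  rewrite <- (tensm_id Y V).
  crewrite <- (assoc_inv_nat e (idm Y) (idm V)).
  now rewrite kelly_lunit_inv'.
Qed.
End Zigzag.

Section RightAction.
Context {C : MonoidalCategory} {X Y : Ob C} (mu : Hom (tens X X) X).

Definition ract {A : Ob C} (f : Hom A (tens Y X)) : Hom (tens A X) (tens Y X) :=
  (idm Y ⊗ mu) ∘ assoc Y X X ∘ (f ⊗ idm X).

Lemma ract_natural {A B : Ob C} (f : Hom B (tens Y X)) (g : Hom A B) :
  ract f ∘ (g ⊗ idm X) = ract (f ∘ g).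
Proof. unfold ract. now rewrite tensm_compr, !comp_assoc. Qed.

Hypothesis mu_assoc : mu ∘ (mu ⊗ idm X) = mu ∘ ((idm X ⊗ mu) ∘ assoc X X X).

Lemma ract_twice {A : Ob C} (f : Hom A (tens Y X)) :
  ract (ract f) = ract f ∘ (idm A ⊗ mu) ∘ assoc A X X.
Proof.
  unfold ract. rewrite !tensm_compr. normalize.
  crewrite (assoc_nat (idm Y) mu (idm X)).
  crewrite <- (tensm_compl Y mu (mu ⊗ idm X)).
  rewrite mu_assoc, !tensm_compl. normalize.
  crewrite <- (pentagon Y X X X).
  crewrite <- (assoc_nat (idm Y) (idm X) mu).
  crewrite (assoc_nat f (idm X) (idm X)).
  rewrite !tensm_id.
  crewrite (interchange_rl f mu).
  now crewrite <- (interchange_lr f mu).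
Qed.
End RightAction.

Section LeftFrobenius.
Context {C : MonoidalCategory} {X Y : Ob C}.
Variables (eps : Hom Y unit) (eta : Hom unit X) (delta : Hom Y (tens Y Y))
  (mu : Hom (tens X X) X) (phi : Hom X (tens Y X)) (psi : Hom (tens X Y) Y).

Hypothesis mu_assoc : mu ∘ (mu ⊗ idm X) = mu ∘ ((idm X ⊗ mu) ∘ assoc X X X).
Hypothesis delta_counit_r : (idm Y ⊗ eps) ∘ delta = runit_inv Y.
Hypothesis psi_unit : psi ∘ (eta ⊗ idm Y) = lunit Y.
Hypothesis phi_counit : (eps ⊗ idm X) ∘ phi = lunit_inv X.
Hypothesis phi_linear :
  phi ∘ mu = (psi ⊗ idm X) ∘ (assoc_inv X Y X ∘ (idm X ⊗ phi)).
Hypothesis psi_colinear :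
  delta ∘ psi = (idm Y ⊗ psi) ∘ (assoc Y X Y ∘ (phi ⊗ idm Y)).

(* The snake identity for e = phi ∘ eta and b = eps ∘ psi: apply (3b) to eta ⊗ Y. *)
Lemma frobenius_zigzag : zigzag (phi ∘ eta) (eps ∘ psi) = idm Y.
Proof.
  unfold zigzag. rewrite tensm_compl, tensm_compr. normalize.
  crewrite <- psi_colinear. crewrite psi_unit. crewrite delta_counit_r.
  now rewrite (comp_assoc (runit Y)), runit_inv_r, comp_idl, lunit_inv_r.
Qed.

(* The multiplication recovered from phi and the pairing: apply eps ⊗ X to (3a). *)
Lemma mu_via_phi :
  mu = lunit X ∘ ((eps ∘ psi) ⊗ idm X) ∘ assoc_inv X Y X ∘ (idm X ⊗ phi).
Proof.
  rewrite tensm_compr. normalize.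
  crewrite <- phi_linear. crewrite phi_counit.
  now rewrite comp_assoc, lunit_inv_r, comp_idl.
Qed.

(* phi is right multiplication by the copairing phi ∘ eta: expanding mu
   leaves a zigzag on the Y-strand in front of phi. *)
Lemma phi_via_copairing : phi = ract mu (phi ∘ eta) ∘ lunit_inv X.
Proof.
  unfold ract. rewrite mu_via_phi, !tensm_compl. normalize.
  crewrite <- (assoc_nat (idm Y) (idm X) phi).
  rewrite (tensm_id Y X).
  crewrite (interchange_rl (phi ∘ eta) phi).
  crewrite <- (interchange_lr (phi ∘ eta) phi).
  crewrite (lunit_inv_nat phi).
  rewrite !comp_assoc, zigzag_tensor, frobenius_zigzag.
  now rewrite tensm_id, comp_idl.
Qed.

Lemma phi_right_linear : ract mu phi = phi ∘ mu.
Proof.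
  symmetry. rewrite phi_via_copairing at 1.
  rewrite <- comp_assoc, <- lunit_inv_nat, <- kelly_lunit_inv. normalize.
  rewrite !comp_assoc, <- (ract_twice mu mu_assoc), ract_natural.
  now rewrite <- phi_via_copairing.
Qed.
End LeftFrobenius.

Lemma left_Frobenius_pair_phi_right_linear {C : MonoidalCategory} {X Y : Ob C}
  {eps : Hom Y unit} {eta : Hom unit X} {delta : Hom Y (tens Y Y)}
  {mu : Hom (tens X X) X} {phi : Hom X (tens Y X)} {psi : Hom (tens X Y) Y} :
  is_left_Frobenius_pair eps eta delta mu phi psi ->
  (idm Y ⊗ mu) ∘ (assoc Y X X ∘ (phi ⊗ idm X)) = phi ∘ mu.
Proof.
  intros (mu_assoc & _ & _ & _ & _ & delta_counit_r & _ & psi_unit & _ & phi_counit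
          & phi_linear & psi_colinear).
  rewrite comp_assoc.
  exact (phi_right_linear eps eta delta mu phi psi mu_assoc delta_counit_r psi_unit
           phi_counit phi_linear psi_colinear).
Qed.

(* Duality: in the opposite category the comonoid Y becomes a monoid and X a
   comonoid, and (psi, phi) take the roles of (phi, psi); each axiom of the
   dual pair is an axiom of the original one, up to moving an associator. *)
Lemma left_Frobenius_pair_opposite {C : MonoidalCategory} {X Y : Ob C}
  {eps : Hom Y unit} {eta : Hom unit X} {delta : Hom Y (tens Y Y)}
  {mu : Hom (tens X X) X} {phi : Hom X (tens Y X)} {psi : Hom (tens X Y) Y} :
  is_left_Frobenius_pair eps eta delta mu phi psi ->
  @is_left_Frobenius_pair (opposite C) Y X eta eps mu delta psi phi.
Proof.
  intros (mu_assoc & mu_unit_l & mu_unit_r & delta_coassoc & delta_counit_l & delta_counit_r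
          & psi_assoc & psi_unit & phi_coassoc & phi_counit & phi_linear & psi_colinear).
  unfold is_left_Frobenius_pair; cbn.
  repeat split; normalize; try assumption.
  - now rewrite <- delta_coassoc, comp_assoc, assoc_inv_l, comp_idl.
  - rewrite comp_assoc, mu_assoc. normalize. now rewrite assoc_inv_r, comp_idr.
  - now rewrite <- phi_coassoc, comp_assoc, assoc_inv_l, comp_idl.
  - rewrite comp_assoc, psi_assoc. normalize. now rewrite assoc_inv_r, comp_idr.
Qed.

Theorem mainTheorem1 (C : MonoidalCategory) (X Y : Ob C)
  (eps : Hom Y unit) (eta : Hom unit X) (delta : Hom Y (tens Y Y))
  (mu : Hom (tens X X) X) (phi : Hom X (tens Y X)) (psi : Hom (tens X Y) Y) :
  is_left_Frobenius_pair eps eta delta mu phi psi ->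
  comp (tensm (idm Y) mu) (comp (assoc Y X X) (tensm phi (idm X))) = comp phi mu /\
  comp (tensm psi (idm Y)) (comp (assoc_inv X Y Y) (tensm (idm X) delta)) = comp delta psi.
Proof.
  intro Hpair. split.
  - exact (left_Frobenius_pair_phi_right_linear Hpair).
  - (* The first claim for the dual pair in the opposite category. *)
    pose proof (left_Frobenius_pair_phi_right_linear (left_Frobenius_pair_opposite Hpair))
      as Hdual.
    cbn in Hdual. now rewrite comp_assoc.
Qed.
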